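(* Let $A$ be an $m\times m$ coloring matrix, let $m'\ge1$, and let $A'$ be the $(m+m')\times(m+m')$ block matrix $$A'=\left[\begin{array}{c|c}A&0\\\hline \mathbf{1}&I\end{array}\right],$$ where $\mathbf{1}$ is the $m'\times m$ all-ones matrix, $I$ is the $m'\times m'$ identity matrix and the upper right block is zero. Then $$\frac{1}{m'}F_{A'}(x)^2+\left(\frac{m'-2}{m'}F_A(x)-1\right)F_{A'}(x)+\left(F_A(x)-\frac{m'-1}{m'}F_A(x)^2+m'x\right)=0,$$ and consequently $$F_{A'}(x)=\frac{m'-(m'-2)F_A(x)}{2}-\frac{\sqrt{(m'-(m'-2)F_A(x))^2-4(m'F_A(x)-(m'-1)F_A(x)^2+(m')^2x)}}{2}.$$
   Context: A plane tree is an unlabeled rooted tree in which the children of every vertex are linearly ordered. A coloring matrix is a square matrix $A=(a_{ij})$ with entries in $\{0,1\}$. An $A$-coloring of a plane tree assigns to each vertex a color (an index of a row of $A$) such that whenever a vertex of color $j$ is a child of a vertex of color $i$, $a_{ij}=1$. Let $t_A(n)$ be the number of pairs (plane tree with $n$ vertices, $A$-coloring of it), and $F_A(x)=\sum_{n\ge1}t_A(n)x^n$ (formal power series). *)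

From HB Require Import structures.
From mathcomp Require Import all_boot all_order all_algebra.
Set Implicit Arguments. Unset Strict Implicit. Unset Printing Implicit Defensive.
Import Order.TTheory GRing.Theory Num.Theory.

(* A pair (plane tree, coloring of it) is encoded as a plane tree whose
   vertices carry a color (a natural number, meant to index a row of A).
   The children of a vertex are given by an ordered list. *)
Inductive ctree : Type := CNode of nat & seq ctree.

Fixpoint ctree_enc (t : ctree) : GenTree.tree nat :=
  let: CNode i s := t in GenTree.Node i (map ctree_enc s).

Fixpoint ctree_dec (t : GenTree.tree nat) : ctree :=
  match t with
  | GenTree.Leaf _ => CNode 0 [::]
  | GenTree.Node i s => CNode i (map ctree_dec s)
  end.

Fixpoint ctree_encK_aux (t : ctree) : ctree_dec (ctree_enc t) = t :=
  match t return ctree_dec (ctree_enc t) = t with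
  | CNode i s => f_equal (CNode i)
      ((fix aux (s' : seq ctree) : map ctree_dec (map ctree_enc s') = s' :=
          match s' return map ctree_dec (map ctree_enc s') = s' with
          | [::] => erefl
          | t' :: s'' => f_equal2 cons (ctree_encK_aux t') (aux s'')
          end) s)
  end.

Lemma ctree_encK : cancel ctree_enc ctree_dec.
Proof. exact: ctree_encK_aux. Qed.

HB.instance Definition _ := Countable.copy ctree (can_type ctree_encK).

Fixpoint csize (t : ctree) : nat :=
  let: CNode _ s := t in (sumn (map csize s)).+1.

Definition color (t : ctree) : nat := let: CNode i _ := t in i.

(* entry a_{ij} of a square matrix, indices given as naturals (0 if out of range) *)
Definition entry (m : nat) (A : 'M[nat]_m) (i j : nat) : nat :=
  match @insub nat (fun k => k < m) 'I_m i, @insub nat (fun k => k < m) 'I_m j with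
  | Some i', Some j' => A i' j'
  | _, _ => 0%N
  end.

Fixpoint acolored (m : nat) (A : 'M[nat]_m) (t : ctree) : bool :=
  let: CNode i s := t in
  [&& i < m, all (fun c => entry A i (color c) == 1%N) s & all (acolored A) s].

Definition coloring_matrix (m : nat) (A : 'M[nat]_m) : Prop :=
  forall i j, A i j = 0%N \/ A i j = 1%N.

Definition counts (P : ctree -> Prop) (k : nat) : Prop :=
  exists s : seq ctree, [/\ uniq s, (forall c, c \in s <-> P c) & size s = k].

Definition tA_is (m : nat) (A : 'M[nat]_m) (n k : nat) : Prop :=
  counts (fun c => acolored A c /\ csize c = n) k.

Definition ps := nat -> rat.
Local Open Scope ring_scope.
Definition psC (c : rat) : ps := fun n => if n is 0%N then c else 0.
Definition psX : ps := fun n => if n == 1%N then 1 else 0.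
Definition psadd (f g : ps) : ps := fun n => f n + g n.
Definition psscale (c : rat) (f : ps) : ps := fun n => c * f n.
Definition psmul (f g : ps) : ps := fun n => \sum_(i < n.+1) f i * g (n - i)%N.

Definition genfun (t : nat -> nat) : ps := fun n => if n is 0%N then 0 else (t n)%:R.

Definition extmx (m m' : nat) (A : 'M[nat]_m) : 'M[nat]_(m + m') :=
  block_mx A 0 (const_mx 1%N) 1%:M.

(* An A'-colored tree whose root has an old color is just an A-colored tree.
   A vertex of a new color c only admits children of old colors or of color c,
   so the trees rooted at c do not depend on c, and detaching the last child of
   the root shows that their generating function H satisfies H = x + H (F + H).
   Hence F' = F + m' H, and eliminating H gives the quadratic equation. Its
   discriminant is the square of G - 2 F' = m' - m' F - 2 m' H, whose constant
   term m' is nonzero, so the prescribed square root S of D is G - 2 F'. *)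

From mathcomp Require Import all_boot all_order all_algebra.
From mathcomp Require Import zify ring.
Set Implicit Arguments. Unset Strict Implicit. Unset Printing Implicit Defensive.
Import GRing.Theory Num.Theory.

Definition has_card (T : eqType) (P : T -> Prop) (k : nat) : Prop :=
  exists s : seq T, [/\ uniq s, (forall x, x \in s <-> P x) & size s = k].

Section HasCard.
Variable T : eqType.
Implicit Types P Q : T -> Prop.

Lemma has_card_uniq P a b : has_card P a -> has_card P b -> a = b.
Proof.
move=> [s1 [u1 m1 <-]] [s2 [u2 m2 <-]].
have e12 : s1 =i s2 by move=> x; apply/idP/idP => [/m1/m2|/m2/m1].
by apply/eqP; rewrite eq_sym -(uniq_size_uniq u1 e12).
Qed.

Lemma eq_has_card P Q k : (forall x, P x <-> Q x) -> has_card P k -> has_card Q k.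
Proof. by move=> PQ [s [us Ps ks]]; exists s; split=> // x; rewrite Ps. Qed.

Lemma has_card0 P : (forall x, ~ P x) -> has_card P 0.
Proof. by move=> nP; exists [::]; split=> // x; split=> // /nP. Qed.

Lemma has_card1 (y : T) : has_card (eq^~ y) 1.
Proof. by exists [:: y]; split=> // x; rewrite inE; split=> [/eqP|->]. Qed.

Lemma has_cardU P Q a b :
  (forall x, P x -> Q x -> False) -> has_card P a -> has_card Q b ->
  has_card (fun x => P x \/ Q x) (a + b).
Proof.
move=> PQ0 [s1 [u1 m1 <-]] [s2 [u2 m2 <-]]; exists (s1 ++ s2); split.
- rewrite cat_uniq u1 u2 andbT /=; apply/hasPn => x /m2 Qx.
  by apply/negP => /m1 /PQ0; apply.
- by move=> x; rewrite mem_cat; split=> [/orP[/m1|/m2]|[/m1|/m2]->]; rewrite ?orbT; auto.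
- by rewrite size_cat.
Qed.

Lemma has_card_bigU (I : eqType) (r : seq I) (P : I -> T -> Prop) (k : I -> nat) :
  uniq r ->
  (forall i j x, i \in r -> j \in r -> P i x -> P j x -> i = j) ->
  (forall i, i \in r -> has_card (P i) (k i)) ->
  has_card (fun x => exists2 i, i \in r & P i x) (\sum_(i <- r) k i).
Proof.
elim: r => [|i r IHr] uir Pdisj Pcard.
  by rewrite big_nil; apply: has_card0 => x [].
case/andP: uir => ir ur; rewrite big_cons.
apply: (@eq_has_card (fun x => P i x \/ exists2 j, j \in r & P j x)).
  move=> x; split=> [[Pix|[j jr Pjx]]|[j]]; first by exists i; rewrite ?mem_head.
    by exists j; rewrite // in_cons jr orbT.
  by rewrite in_cons => /orP[/eqP->|jr Pjx]; [left | right; exists j].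
apply: has_cardU; last 2 first.
- by apply: Pcard; rewrite mem_head.
- apply: IHr => // [j l x jr lr|j jr]; last by apply: Pcard; rewrite in_cons jr orbT.
  by apply: Pdisj; rewrite in_cons ?jr ?lr orbT.
move=> x Pix [j jr Pjx]; suff ij : i = j by move: ir; rewrite ij jr.
by apply: (Pdisj i j x); rewrite ?in_cons ?jr ?eqxx ?orbT.
Qed.

End HasCard.

Lemma has_card_img2 (T U V : eqType) (P : T -> Prop) (Q : U -> Prop) (f : T -> U -> V) a b :
  (forall x y x' y', f x y = f x' y' -> x = x' /\ y = y') ->
  has_card P a -> has_card Q b ->
  has_card (fun z => exists x y, [/\ P x, Q y & z = f x y]) (a * b).
Proof.
move=> f_inj [s1 [u1 m1 <-]] [s2 [u2 m2 <-]].
exists [seq f x y | x <- s1, y <- s2]; split; last by rewrite size_allpairs.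
- by apply: allpairs_uniq => // [[x y] [x' y']] _ _ /f_inj[-> ->].
- move=> z; split=> [/allpairsP[[x y] /= [/m1 Px /m2 Qy ->]]|[x [y [/m1 Px /m2 Qy ->]]]].
    by exists x, y.
  by apply/allpairsP; exists (x, y).
Qed.

(* [rooted_count t n] counts the A'-colored trees of size n with a fixed new
   root color, [t] counting the A-colored trees; the fuel only serves to make
   the recursion structural. *)
Fixpoint rooted_count_fuel (t : nat -> nat) (fuel n : nat) : nat :=
  if fuel is f.+1 then
    (n == 1) + \sum_(1 <= i < n)
                 rooted_count_fuel t f i * (t (n - i) + rooted_count_fuel t f (n - i))
  else 0.

Definition rooted_count t n := rooted_count_fuel t n n.

Lemma rooted_count_fuelE t f n : n <= f -> rooted_count_fuel t f n = rooted_count t n.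
Proof.
elim/ltn_ind: n f => n IHn [|f] le_nf; first by case: n le_nf {IHn}.
rewrite /rooted_count; case: n le_nf IHn => [|n] le_nf IHn /=; first by rewrite big_geq.
congr (_ + _); apply: eq_big_nat => i /andP[lt0i lt_in]; rewrite !IHn //; lia.
Qed.

Lemma rooted_count_rec t n : rooted_count t n =
  (n == 1) + \sum_(1 <= i < n) rooted_count t i * (t (n - i) + rooted_count t (n - i)).
Proof.
case: n => [|n]; first by rewrite big_geq.
rewrite {1}/rooted_count /=; congr (_ + _).
by apply: eq_big_nat => i /andP[lt0i lt_in]; rewrite !rooted_count_fuelE //; lia.
Qed.

Lemma entry_out n (B : 'M[nat]_n) i j : ~~ ((i < n) && (j < n)) -> entry B i j = 0.
Proof.
by rewrite /entry; case: insubP => [i' -> _|//]; case: insubP => [j' -> _|].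
Qed.

Lemma entry_ord n (B : 'M[nat]_n) (i j : 'I_n) : entry B i j = B i j.
Proof. by rewrite /entry !valK. Qed.

Section ExtMatrix.
Variables (m m' : nat) (A : 'M[nat]_m).

Lemma entry_extmx i j : i < m + m' ->
  entry (extmx m' A) i j = if i < m then entry A i j else ((j < m) || (j == i)).
Proof.
move=> lt_i; have [lt_j|ge_j] := ltnP j (m + m'); last first.
  have ->: entry (extmx m' A) i j = 0 by rewrite entry_out //; lia.
  case: ifP => lt_im; first by rewrite entry_out //; lia.
  by have ->: (j < m) || (j == i) = false by lia.
pose i' := Ordinal lt_i; pose j' := Ordinal lt_j.
rewrite -[i]/(nat_of_ord i') -[j]/(nat_of_ord j') entry_ord /extmx.
clearbody i' j'.
case: (split_ordP i') => i0 ->; case: (split_ordP j') => j0 ->.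
- by rewrite block_mxEul entry_ord.
- by rewrite block_mxEur mxE entry_out //= [m + _ < _]ltnNge leq_addr andbF.
- by rewrite block_mxEdl mxE.
- by rewrite block_mxEdr mxE /= eqn_add2l eq_sym val_eqE; case: (_ == _).
Qed.
End ExtMatrix.


Lemma ctree_ind_children (P : ctree -> Prop) :
  (forall i s, (forall u, u \in s -> P u) -> P (CNode i s)) -> forall t, P t.
Proof.
move=> IH t; elim: {t}(csize t) {-2}t (leqnn (csize t)) => [|n IHn] [i s] //= le_s.
apply: IH => u us; apply: IHn; rewrite ltnS in le_s; apply: leq_trans le_s.
by elim: s us => //= v s IHs; rewrite in_cons => /orP[/eqP->|/IHs]; lia.
Qed.

Lemma entry_eq1_lt n (B : 'M[nat]_n) i j : entry B i j == 1 -> j < n.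
Proof. by case: (ltnP j n) => // le_nj; rewrite entry_out // [j < n]ltnNge le_nj andbF. Qed.

Lemma acolored_color n (B : 'M[nat]_n) u : acolored B u -> color u < n.
Proof. by case: u => i s /and3P[]. Qed.

Definition colored_tree d (B : 'M[nat]_d) n u := acolored B u /\ csize u = n.

Definition children u := let: CNode _ s := u in s.

Definition graft x y := CNode (color x) (rcons (children x) y).

Lemma graft_inj x y x' y' : graft x y = graft x' y' -> x = x' /\ y = y'.
Proof. by case: x => i s; case: x' => i' s' [-> /rcons_inj[-> ->]]. Qed.

Lemma csize_graft x y : csize (graft x y) = csize x + csize y.
Proof. by case: x => i s /=; rewrite map_rcons sumn_rcons addSn. Qed.

Section ExtColoring.
Variables (m m' : nat) (A : 'M[nat]_m).
Local Notation A' := (extmx m' A).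

Lemma acolored_extmx_old u : color u < m -> acolored A' u = acolored A u.
Proof.
elim/ctree_ind_children: u => i s IHs /= lt_im.
have lt_i : i < m + m' by apply: leq_trans lt_im (leq_addr _ _).
rewrite lt_i lt_im /= (eq_all (a2 := fun u => entry A i (color u) == 1)); last first.
  by move=> u; rewrite entry_extmx // lt_im.
case: (boolP (all _ s)) => //= /allP Es; apply: eq_in_all => u us.
exact/IHs/(entry_eq1_lt (Es u us)).
Qed.

Lemma acolored_extmx_new c s : m <= c < m + m' ->
  acolored A' (CNode c s) =
  all (fun u => (color u < m) || (color u == c)) s && all (acolored A') s.
Proof.
case/andP=> le_mc lt_c /=; rewrite lt_c /=; congr (_ && _); apply: eq_all => u.
by rewrite entry_extmx // ltnNge le_mc; case: (_ || _).
Qed.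

Definition rooted_tree c n u := [/\ acolored A' u, color u = c & csize u = n].

Lemma colored_rooted_disjoint c n n' u :
  m <= c -> colored_tree A n u -> rooted_tree c n' u -> False.
Proof.
by move=> le_mc [/acolored_color + _] [_ cu _]; rewrite cu ltnNge le_mc.
Qed.

Lemma acolored_graft c x y : m <= c < m + m' -> color x = c ->
  acolored A' (graft x y) =
  [&& acolored A' x, (color y < m) || (color y == c) & acolored A' y].
Proof.
case: x => i s cP ci; rewrite /= in ci; subst i.
have ->: graft (CNode c s) y = CNode c (rcons s y) by [].
rewrite !acolored_extmx_new // !all_rcons.
by case: (_ || _); case: (acolored A' y); case: (all _ s); case: (all _ s).
Qed.

Lemma rooted_treeP c n u : m <= c < m + m' ->
  rooted_tree c n u <->
  (u = CNode c [::] /\ n = 1) \/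
  exists2 i, i \in index_iota 1 n & exists x y,
    [/\ rooted_tree c i x, colored_tree A (n - i) y \/ rooted_tree c (n - i) y
       & u = graft x y].
Proof.
move=> cP; split=> [[acu cu <-]|].
  case: u acu cu => i s + ci; rewrite /= in ci; subst i.
  case/lastP: s => [|s y] acu; [by left | right].
  have uE : CNode c (rcons s y) = graft (CNode c s) y by [].
  move: acu; rewrite {}uE (acolored_graft _ cP) // => /and3P[acx cy acy].
  exists (csize (CNode c s)); last exists (CNode c s), y.
    by rewrite mem_index_iota csize_graft; case: y {cy acy} => ? ? /=; lia.
  split=> //; rewrite csize_graft addKn.
  case/orP: cy => [cy|/eqP cy]; last by right.
  by left; split; rewrite // -(acolored_extmx_old cy).
case=> [[-> ->]|[i iP [x [y [[acx cx sx] Qy ->]]]]].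
  by split=> //; rewrite acolored_extmx_new.
have [acy cy sy] : [/\ acolored A' y, (color y < m) || (color y == c) & csize y = n - i].
  case: Qy => [[acy sy]|[acy -> sy]]; last by split; rewrite ?eqxx ?orbT.
  by have cy := acolored_color acy; split; rewrite ?acolored_extmx_old ?cy.
split; first by rewrite (acolored_graft _ cP) // acx cy acy.
  by case: x cx {acx sx}.
by rewrite csize_graft sx sy subnKC //; move: iP; rewrite mem_index_iota => /andP[_ /ltnW].
Qed.

Section Counting.
Variable t : nat -> nat.
Hypothesis t_card : forall n, has_card (colored_tree A n) (t n).

Lemma has_card_rooted_tree n c : m <= c < m + m' ->
  has_card (rooted_tree c n) (rooted_count t n).
Proof.
elim/ltn_ind: n c => n IHn c cP; have le_mc : m <= c by case/andP: cP.
rewrite rooted_count_rec; apply: eq_has_card (fun u => iff_sym (rooted_treeP n u cP)) _.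
apply: has_cardU => [u [-> _] [i _ [x [y [_ _ /(congr1 children)]]]]||].
- by case: x => ? [].
- case: eqP => [->|n1]; last by apply: has_card0 => u [].
  by apply: eq_has_card (has_card1 (CNode c [::])) => u; split=> [|[]].
apply: has_card_bigU => [||i]; first exact: iota_uniq.
  move=> i j u _ _ [x [y [[_ _ sx] _ ->]]] [x' [y' [[_ _ sx'] _ /graft_inj[exx' _]]]].
  by rewrite -sx -sx' exx'.
rewrite mem_index_iota => /andP[lt0i lt_in].
apply: has_card_img2 graft_inj (IHn i lt_in c cP) _.
apply: has_cardU (t_card _) (IHn _ _ c cP); last by rewrite ltn_subrL lt0i; lia.
by move=> u; apply: colored_rooted_disjoint.
Qed.

Lemma has_card_extmx_tree n : has_card (colored_tree A' n) (t n + m' * rooted_count t n).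
Proof.
have ->: (m' * rooted_count t n = \sum_(m <= c < m + m') rooted_count t n)%N.
  by rewrite sum_nat_const_nat addKn.
apply: eq_has_card (has_cardU _ (t_card n) (has_card_bigU (r := index_iota m (m + m'))
                                     (P := fun c => rooted_tree c n) (iota_uniq _ _) _ _)).
- move=> u; rewrite /colored_tree; split=> [[[acu su]|[c _ [acu _ su]]]|[acu su]] //.
    by rewrite acolored_extmx_old ?(acolored_color acu).
  case: (ltnP (color u) m) => [lt_um|le_mu].
    by left; rewrite -(acolored_extmx_old lt_um).
  right; exists (color u) => //; rewrite mem_index_iota le_mu.
  exact: acolored_color acu.
- move=> u Au [c]; rewrite mem_index_iota => /andP[le_mc _].
  exact: colored_rooted_disjoint le_mc Au.
- by move=> c c' u _ _ [_ <- _] [_ <- _].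
- by move=> c; rewrite mem_index_iota => /has_card_rooted_tree.
Qed.

End Counting.

End ExtColoring.

Local Open Scope ring_scope.

Section PowerSeries.
Implicit Types (f g h : ps) (c : rat).

Lemma psaddE f g n : psadd f g n = f n + g n. Proof. by []. Qed.

Lemma psscaleE c f n : psscale c f n = c * f n. Proof. by []. Qed.

Lemma eq_psmul f f' g g' n : f =1 f' -> g =1 g' -> psmul f g n = psmul f' g' n.
Proof. by move=> ff' gg'; apply: eq_bigr => i _; rewrite ff' gg'. Qed.

Lemma psmulC f g n : psmul f g n = psmul g f n.
Proof.
rewrite /psmul (reindex_inj rev_ord_inj) /=.
by apply: eq_bigr => i _; rewrite subSS subKn 1?mulrC // -ltnS.
Qed.

Lemma psmulDl f g h n : psmul (psadd f g) h n = psmul f h n + psmul g h n.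
Proof. by rewrite -big_split; apply: eq_bigr => i _; rewrite mulrDl. Qed.

Lemma psmulDr f g h n : psmul f (psadd g h) n = psmul f g n + psmul f h n.
Proof. by rewrite -big_split; apply: eq_bigr => i _; rewrite mulrDr. Qed.

Lemma psmulZl c f g n : psmul (psscale c f) g n = c * psmul f g n.
Proof. by rewrite mulr_sumr; apply: eq_bigr => i _; rewrite mulrA. Qed.

Lemma psmulZr c f g n : psmul f (psscale c g) n = c * psmul f g n.
Proof. by rewrite psmulC psmulZl psmulC. Qed.

Lemma psmulCl c g n : psmul (psC c) g n = c * g n.
Proof. by rewrite /psmul big_ord_recl subn0 big1 ?addr0 // => i _; rewrite mul0r. Qed.

Lemma psmulCr c f n : psmul f (psC c) n = c * f n.
Proof. by rewrite psmulC psmulCl. Qed.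

Definition psmulE := (psmulDl, psmulDr, psmulZl, psmulZr, psmulCl, psmulCr).

Lemma psmul_eq0 f g : f 0%N != 0 -> (forall n, psmul f g n = 0) -> forall n, g n = 0.
Proof.
move=> f0 fg0; elim/ltn_ind => n IHn; have := fg0 n.
rewrite /psmul big_ord_recl subn0 big1 ?addr0 => [/eqP|i _].
  by rewrite mulf_eq0 (negbTE f0) => /eqP.
by rewrite lift0 IHn ?mulr0 //; have := ltn_ord i; lia.
Qed.

Lemma ps_sqrt_uniq f g : f 0%N = g 0%N -> f 0%N != 0 ->
  (forall n, psmul f f n = psmul g g n) -> f =1 g.
Proof.
(* f^2 - g^2 = (f + g) (f - g), and f + g has the nonzero constant term 2 f_0. *)
move=> fg0 f0 ffgg n; apply/eqP; rewrite -subr_eq0 -mulN1r; apply/eqP.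
apply: (psmul_eq0 (f := psadd f g) (g := psadd f (psscale (-1) g))) => [|k].
  by rewrite /psadd -fg0 -mulr2n mulrn_eq0 negb_or f0.
by rewrite !psmulE ffgg [psmul g f k]psmulC; ring.
Qed.

End PowerSeries.

Definition rooted_gf t : ps := fun n => (rooted_count t n)%:R.

Lemma rooted_gfE t n :
  rooted_gf t n = psX n + psmul (rooted_gf t) (psadd (genfun t) (rooted_gf t)) n.
Proof.
case: n => [|n]; first by rewrite /psmul big_ord1 /rooted_gf mul0r addr0.
rewrite /rooted_gf rooted_count_rec natrD natr_sum /psmul big_ord_recl big_ord_recr /=.
have ->: (n.+1 - bump 0 n = 0)%N by rewrite /bump; lia.
rewrite (_ : rooted_count t 0 = 0%N) // /psadd mul0r add0r addr0 big_add1 big_mkord /=.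
rewrite mulr0 addr0; congr (_ + _); first by rewrite /psX; case: (n.+1 == 1%N).
apply: eq_bigr => i _; rewrite natrM natrD /bump add1n subSS.
by have [k ->] : exists k, (n - i = k.+1)%N by exists (n - i).-1; have := ltn_ord i; lia.
Qed.

Section ExtendedSeries.
Variables (F H F' : ps) (k : rat).
Hypothesis H_eq : forall n, H n = psX n + psmul H (psadd F H) n.
Hypothesis F'_eq : forall n, F' n = F n + k * H n.

Let F'E : F' =1 psadd F (psscale k H) := F'_eq.

Lemma extended_series_quadratic : k != 0 -> forall n,
  psadd (psadd (psscale (1 / k) (psmul F' F'))
               (psmul (psadd (psscale ((k - 2) / k) F) (psC (-1))) F'))
        (psadd (psadd F (psscale (- ((k - 1) / k)) (psmul F F))) (psscale k psX)) n = 0.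
Proof.
move=> k_neq0 n; have := H_eq n; rewrite psmulDr [psmul H F n]psmulC => Hn.
rewrite !psaddE !psscaleE (eq_psmul n F'E F'E) (eq_psmul n (frefl _) F'E) !psmulE.
rewrite [psmul H F n]psmulC Hn.
by field.
Qed.

Lemma extended_series_root : F 0%N = 0 -> H 0%N = 0 -> k != 0 ->
  let G := psadd (psC k) (psscale (- (k - 2)) F) in
  let D := psadd (psmul G G)
             (psscale (-4) (psadd (psadd (psscale k F) (psscale (- (k - 1)) (psmul F F)))
                                  (psscale (k ^+ 2) psX))) in
  forall S : ps, S 0%N = k -> (forall n, psmul S S n = D n) ->
  forall n, F' n = psadd (psscale (1 / 2) G) (psscale (- (1 / 2)) S) n.
Proof.
move=> F0 H0 k_neq0 G D S S0 SS.
pose U := psadd G (psscale (-2) F').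
have U0 : U 0%N = k by rewrite /U /G /psadd /psscale F'_eq F0 H0 /= !mulr0 !addr0.
have UU n : psmul U U n = D n.
  have := H_eq n; rewrite psmulDr [psmul H F n]psmulC => Hn.
  rewrite /U /D /G !psaddE !psscaleE !psmulE (eq_psmul n F'E F'E) (eq_psmul n (frefl _) F'E).
  rewrite (eq_psmul n F'E (frefl _)) !psmulE [psmul H F n]psmulC !psaddE !psscaleE !F'_eq Hn.
  ring.
have SU : S =1 U by apply: ps_sqrt_uniq => [||n]; rewrite ?S0 ?U0 ?SS ?UU.
move=> n; rewrite /psadd /psscale SU /U /psadd /psscale.
by field.
Qed.

End ExtendedSeries.

Unset Implicit Arguments.

Theorem theorem27 (m m' : nat) (A : 'M[nat]_m) (t t' : nat -> nat) :
  coloring_matrix A ->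
  (1 <= m')%N ->
  (forall n, tA_is A n (t n)) ->
  (forall n, tA_is (extmx m' A) n (t' n)) ->
  let F := genfun t in
  let F' := genfun t' in
  let k : rat := m'%:R in
  (* (1/m') F'^2 + ((m'-2)/m' F - 1) F' + (F - (m'-1)/m' F^2 + m' x) = 0 *)
  (forall n,
     psadd (psadd (psscale (1 / k) (psmul F' F'))
                  (psmul (psadd (psscale ((k - 2) / k) F) (psC (-1))) F'))
           (psadd (psadd F (psscale (- ((k - 1) / k)) (psmul F F))) (psscale k psX))
       n = 0)
  /\
  (* F' = (m' - (m'-2)F)/2 - sqrt(D)/2, where sqrt(D) is the power series square
     root of D = (m' - (m'-2)F)^2 - 4(m'F - (m'-1)F^2 + m'^2 x) with constant term
     sqrt(m'^2) = m' *)
  (let G := psadd (psC k) (psscale (- (k - 2)) F) in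
   let D := psadd (psmul G G)
              (psscale (-4) (psadd (psadd (psscale k F) (psscale (- (k - 1)) (psmul F F)))
                                   (psscale (k ^+ 2) psX))) in
   forall S : ps, S 0%N = k -> (forall n, psmul S S n = D n) ->
   forall n, F' n = psadd (psscale (1 / 2) G) (psscale (- (1 / 2)) S) n).
Proof.
move=> _ m'_gt0 t_card t'_card F F' k.
have k_neq0 : k != 0 by rewrite pnatr_eq0 -lt0n.
have F'E n : F' n = F n + k * rooted_gf t n.
  case: n => [|n]; first by rewrite /F' /F /= mulr0 addr0.
  have t'E := has_card_uniq (t'_card n.+1) (has_card_extmx_tree m' t_card n.+1).
  by rewrite /F' /F /= t'E natrD natrM.
split; first exact: extended_series_quadratic (rooted_gfE t) F'E k_neq0.
exact: extended_series_root (rooted_gfE t) F'E _ _ k_neq0.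
Qed.
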